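(* Let $\omega>0$, $\mu>0$ and $l=B/\omega\in\mathbb Z$. Then the Stokes multipliers $c_0$ and $c_1$ of the linear system (L) are real.
   Context: Let $\omega>0$, $l\in\mathbb R$, $\mu>0$. System (L) on the Riemann sphere is: $u'=z^{-2}\big(-(lz+\mu(1+z^2))u+\frac{z}{2i\omega}v\big)$, $v'=\frac{1}{2i\omega z}u$, with $w=(u,v)$. It has irregular singular points at $0$ and $\infty$, and at $0$ it is formally equivalent to the diagonal system $\tilde u'=-z^{-2}(lz+\mu(1+z^2))\tilde u$, $\tilde v'=0$, with fundamental matrix $F(z)=\operatorname{diag}(z^{-l}e^{\mu(1/z-z)},1)$. Let $S_+$ (resp. $S_-$) be a sector with vertex $0$ containing the closed upper (resp. lower) half-plane minus $0$, whose closure avoids the opposite imaginary semiaxis $i\mathbb R_-$ (resp. $i\mathbb R_+$), with $S_-$ the complex conjugate of $S_+$. There are unique invertible matrix functions $H_\pm$ holomorphic on $S_\pm$, $C^\infty$ on $\overline{S_\pm}\setminus\{\infty\}$, with $H_\pm(0)=\mathrm{Id}$, such that $w=H_\pm(z)\tilde w$ transforms (L) into the diagonal system. The canonical fundamental matrices are $W_\pm=H_\pm F$, where the branch of $F$ on $S_-$ is the counterclockwise continuation of the branch on $S_+$; $W_{+,1}=H_+F$ with the branch of $F$ on $S_+$ obtained by continuing counterclockwise from $S_-$. Let $\Sigma_0$ (containing $\mathbb R_-$) and $\Sigma_1$ (containing $\mathbb R_+$) be the left and right components of $S_+\cap S_-$. The Stokes matrices are defined by $W_-=W_+C_0$ on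 $\Sigma_0$ and $W_{+,1}=W_-C_1$ on $\Sigma_1$; for $\mu>0$ they have the form $C_0=\begin{pmatrix}1&c_0\\0&1\end{pmatrix}$, $C_1=\begin{pmatrix}1&0\\c_1&1\end{pmatrix}$, and $c_0,c_1$ are the Stokes multipliers. *)

From Stdlib Require Import Reals ZArith.
Open Scope R_scope.

Definition Cx := (R * R)%type.
Definition RtoC (x : R) : Cx := (x, 0).
Definition C0 : Cx := (0, 0).
Definition C1 : Cx := (1, 0).
Definition Ci : Cx := (0, 1).
Definition Re (a : Cx) : R := fst a.
Definition Im (a : Cx) : R := snd a.
Definition Cadd (a b : Cx) : Cx := (fst a + fst b, snd a + snd b).
Definition Copp (a : Cx) : Cx := (- fst a, - snd a).
Definition Csub (a b : Cx) : Cx := Cadd a (Copp b).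
Definition Cmul (a b : Cx) : Cx :=
  (fst a * fst b - snd a * snd b, fst a * snd b + snd a * fst b).
Definition Cnorm2 (a : Cx) : R := fst a * fst a + snd a * snd a.
Definition Cnorm (a : Cx) : R := sqrt (Cnorm2 a).
Definition Cinv (a : Cx) : Cx := (fst a / Cnorm2 a, - snd a / Cnorm2 a).
Definition Cdiv (a b : Cx) : Cx := Cmul a (Cinv b).
Definition Cconj (a : Cx) : Cx := (fst a, - snd a).
Definition Cexp (a : Cx) : Cx := (exp (fst a) * cos (snd a), exp (fst a) * sin (snd a)).
Fixpoint Cpow (z : Cx) (n : nat) : Cx :=
  match n with O => C1 | S k => Cmul z (Cpow z k) end.
(* integer power z^k, single valued since k is an integer *)
Definition Cpowz (z : Cx) (k : Z) : Cx :=
  match k with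
  | Z0 => C1
  | Zpos p => Cpow z (Pos.to_nat p)
  | Zneg p => Cinv (Cpow z (Pos.to_nat p))
  end.
Definition Cpolar (r theta : R) : Cx := (r * cos theta, r * sin theta).

Record M2 := mkM2 { m11 : Cx; m12 : Cx; m21 : Cx; m22 : Cx }.
Definition Mid : M2 := mkM2 C1 C0 C0 C1.
Definition Mmul (A B : M2) : M2 :=
  mkM2 (Cadd (Cmul (m11 A) (m11 B)) (Cmul (m12 A) (m21 B)))
       (Cadd (Cmul (m11 A) (m12 B)) (Cmul (m12 A) (m22 B)))
       (Cadd (Cmul (m21 A) (m11 B)) (Cmul (m22 A) (m21 B)))
       (Cadd (Cmul (m21 A) (m12 B)) (Cmul (m22 A) (m22 B))).
Definition Msub (A B : M2) : M2 :=
  mkM2 (Csub (m11 A) (m11 B)) (Csub (m12 A) (m12 B))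
       (Csub (m21 A) (m21 B)) (Csub (m22 A) (m22 B)).
Definition Mscale (c : Cx) (A : M2) : M2 :=
  mkM2 (Cmul c (m11 A)) (Cmul c (m12 A)) (Cmul c (m21 A)) (Cmul c (m22 A)).
Definition Mdet (A : M2) : Cx := Csub (Cmul (m11 A) (m22 A)) (Cmul (m12 A) (m21 A)).
Definition Mnorm (A : M2) : R :=
  Cnorm (m11 A) + Cnorm (m12 A) + Cnorm (m21 A) + Cnorm (m22 A).

Definition is_deriv_within (S : Cx -> Prop) (f : Cx -> M2) (z : Cx) (d : M2) : Prop :=
  forall eps : R, 0 < eps -> exists del : R, 0 < del /\
    forall h : Cx, h <> C0 -> Cnorm h < del -> S (Cadd z h) ->
      Mnorm (Msub (Mscale (Cinv h) (Msub (f (Cadd z h)) (f z))) d) < eps.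

Definition cont_within (K : Cx -> Prop) (f : Cx -> M2) : Prop :=
  forall z : Cx, K z -> forall eps : R, 0 < eps -> exists del : R, 0 < del /\
    forall y : Cx, K y -> Cnorm (Csub y z) < del -> Mnorm (Msub (f y) (f z)) < eps.

(* H is holomorphic on the open set S and C^infinity on K = closure(S) (minus oo):
   all complex derivatives of H on S extend continuously to K; H itself denotes
   its extension to K. *)
Definition smooth_up_to (U K : Cx -> Prop) (H : Cx -> M2) : Prop :=
  exists Hn : nat -> Cx -> M2,
    Hn O = H /\
    (forall (n : nat) (z : Cx), U z -> is_deriv_within U (Hn n) z (Hn (Datatypes.S n) z)) /\
    (forall n : nat, cont_within K (Hn n)).

Definition Sector (al be : R) (z : Cx) : Prop :=
  exists r theta, 0 < r /\ al < theta < be /\ z = Cpolar r theta.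
Definition ClSector (al be : R) (z : Cx) : Prop :=
  z = C0 \/ exists r theta, 0 < r /\ al <= theta <= be /\ z = Cpolar r theta.
Definition SectorConj (al be : R) (z : Cx) : Prop := Sector al be (Cconj z).
Definition ClSectorConj (al be : R) (z : Cx) : Prop := ClSector al be (Cconj z).
(* left component Sigma_0 (containing R_-) and right component Sigma_1
   (containing R_+) of S_+ /\ S_- *)
Definition Sigma0 (al be : R) (z : Cx) : Prop :=
  Sector al be z /\ SectorConj al be z /\ Re z < 0.
Definition Sigma1 (al be : R) (z : Cx) : Prop :=
  Sector al be z /\ SectorConj al be z /\ 0 < Re z.

Definition two_i_om (om : R) : Cx := (0, 2 * om).
Definition polyL (mu : R) (l : Z) (z : Cx) : Cx :=
  Copp (Cadd (Cmul (RtoC (IZR l)) z) (Cmul (RtoC mu) (Cadd C1 (Cmul z z)))).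
(* coefficient matrix of (L): w' = A_L(z) w *)
Definition A_L (om mu : R) (l : Z) (z : Cx) : M2 :=
  mkM2 (Cdiv (polyL mu l z) (Cmul z z))
       (Cdiv (Cdiv z (two_i_om om)) (Cmul z z))
       (Cdiv C1 (Cmul (two_i_om om) z))
       C0.
(* coefficient matrix of the diagonal (formal normal form) system *)
Definition D_L (mu : R) (l : Z) (z : Cx) : M2 :=
  mkM2 (Cdiv (polyL mu l z) (Cmul z z)) C0 C0 C0.
Definition F_L (mu : R) (l : Z) (z : Cx) : M2 :=
  mkM2 (Cmul (Cpowz z (- l)) (Cexp (Cmul (RtoC mu) (Csub (Cinv z) z)))) C0 C0 C1.

(* H is the normalizing transformation on the sector S (closure K):
   invertible, holomorphic on S, C^oo on K, H(0) = Id, and w = H(z) w~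
   transforms (L) into the diagonal system, i.e. H' = A_L H - H D_L on S. *)
Definition normalizing (om mu : R) (l : Z) (S K : Cx -> Prop) (H : Cx -> M2) : Prop :=
  smooth_up_to S K H /\
  H C0 = Mid /\
  (forall z, S z -> Mdet (H z) <> C0) /\
  (forall z, S z ->
     is_deriv_within S H z (Msub (Mmul (A_L om mu l z) (H z)) (Mmul (H z) (D_L mu l z)))).

Definition W_L (mu : R) (l : Z) (H : Cx -> M2) (z : Cx) : M2 := Mmul (H z) (F_L mu l z).

Definition StokesC0 (c : Cx) : M2 := mkM2 C1 c C0 C1.
Definition StokesC1 (c : Cx) : M2 := mkM2 C1 C0 c C1.

From Pilot Require Import Defs.
From Stdlib Require Import Reals ZArith Lra.
From Coquelicot Require Complex.
Open Scope R_scope.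

(* The map [H |-> (z |-> J conj(H (conj z)) J)], [J = diag(1, -1)], sends normalizing
   transformations of (L) on [S_+] to ones on [S_-], because [A_L (conj z) = J conj(A_L z) J].
   So [H_-] and the reflection [G] of [H_+] both normalize (L) on [S_-].  For two such
   solutions [X], [Y], the matrix [Z = adj(X) Y] satisfies [Z' = D Z - Z D] with
   [D = diag(lambda, 0)], [lambda = -(l z + mu (1 + z^2)) / z^2]: the diagonal of [Z] is
   constant, equal to 1 since [Z -> Id] at 0, and [Z_12], [Z_21] solve [g' = +-lambda g].
   For [mu > 0] the sign of [Re lambda] makes [|Z_12|] decrease away from 0 along the positive
   real axis and from [r] to [-r] along the lower half circle of radius [r < 1], and likewise
   [|Z_21|] from 0 along the negative axis and from [-r] to [r]; hence [Z = Id] at [+-r],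
   and since [det H_- = 1] (the same argument with [Y = X]) we get [G = H_-] there.  On the
   real axis [F] is real and diagonal ([l] is an integer), so comparing the Stokes relations
   at [-r] and [r] with their reflections makes [c_0] and [c_1] real. *)

(* [Reals] exports an unrelated [C1]. *)
Local Notation C1 := Defs.C1.

Lemma Cx_ring : ring_theory C0 C1 Cadd Cmul Csub Copp (@eq Cx).
Proof.
  constructor; intros; repeat match goal with x : Cx |- _ => destruct x end;
  unfold Csub, Cadd, Cmul, Copp, C0, C1; simpl; f_equal; ring.
Qed.
Add Ring Cx_ring : Cx_ring.

Lemma Cnorm_Cmod a : Cnorm a = Complex.Cmod a.
Proof. unfold Cnorm, Cnorm2, Complex.Cmod; f_equal; ring. Qed.

Lemma Cnorm_add_le a b : Cnorm (Cadd a b) <= Cnorm a + Cnorm b.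
Proof. rewrite !Cnorm_Cmod; apply Complex.Cmod_triangle. Qed.

Lemma Cnorm_mul a b : Cnorm (Cmul a b) = Cnorm a * Cnorm b.
Proof. rewrite !Cnorm_Cmod; apply Complex.Cmod_mult. Qed.

Lemma Cnorm_opp a : Cnorm (Copp a) = Cnorm a.
Proof. rewrite !Cnorm_Cmod; apply Complex.Cmod_opp. Qed.

Lemma Cnorm_conj a : Cnorm (Cconj a) = Cnorm a.
Proof. rewrite !Cnorm_Cmod; apply Complex.Cmod_conj. Qed.

Lemma Cnorm_RtoC x : Cnorm (RtoC x) = Rabs x.
Proof. rewrite Cnorm_Cmod; apply Complex.Cmod_R. Qed.

Lemma Cnorm_ge0 a : 0 <= Cnorm a.
Proof. apply sqrt_pos. Qed.

Lemma Rabs_Re_Im_le a : Rabs (Re a) <= Cnorm a /\ Rabs (Im a) <= Cnorm a.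
Proof.
  rewrite Cnorm_Cmod; pose proof (Complex.Rmax_Cmod a).
  pose proof (Rmax_l (Rabs (fst a)) (Rabs (snd a))).
  pose proof (Rmax_r (Rabs (fst a)) (Rabs (snd a))); unfold Re, Im; lra.
Qed.

Lemma Cnorm_lt_of_parts a d :
  Rabs (Re a) < d / 2 -> Rabs (Im a) < d / 2 -> Cnorm a < d.
Proof.
  intros Hre Him; rewrite Cnorm_Cmod.
  eapply Rle_lt_trans; [apply Complex.Cmod_2Rmax|].
  assert (Hsqrt2 : sqrt 2 < 2).
  { pose proof (sqrt_sqrt 2 ltac:(lra)); pose proof (sqrt_pos 2); nra. }
  pose proof (sqrt_pos 2); pose proof (Rabs_pos (fst a)); unfold Re, Im in *.
  assert (Hd : 0 < d) by lra.
  apply Rmax_case_strong; intros _.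
  - assert (sqrt 2 * Rabs (fst a) <= sqrt 2 * (d / 2)) by (apply Rmult_le_compat_l; lra); nra.
  - assert (sqrt 2 * Rabs (snd a) <= sqrt 2 * (d / 2))
      by (apply Rmult_le_compat_l; [|pose proof (Rabs_pos (snd a))]; lra); nra.
Qed.

Lemma Cnorm2_ge0 a : 0 <= Cnorm2 a.
Proof. unfold Cnorm2; nra. Qed.

Lemma Cnorm2_conj a : Cnorm2 (Cconj a) = Cnorm2 a.
Proof. unfold Cnorm2, Cconj; simpl; ring. Qed.

Lemma Cnorm2_opp a : Cnorm2 (Copp a) = Cnorm2 a.
Proof. unfold Cnorm2, Copp; simpl; ring. Qed.

Lemma Cnorm2_sqr a : Cnorm2 a = Cnorm a * Cnorm a.
Proof. unfold Cnorm; rewrite sqrt_sqrt; auto using Cnorm2_ge0. Qed.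

Lemma Cnorm2_le0 a : Cnorm2 a <= 0 -> a = C0.
Proof. destruct a as [x y]; unfold Cnorm2, C0; simpl; intro; f_equal; nra. Qed.

Lemma Cnorm2_pos a : a <> C0 -> 0 < Cnorm2 a.
Proof.
  intro Ha; destruct (Rle_lt_dec (Cnorm2 a) 0) as [H|H]; auto.
  now apply Cnorm2_le0 in H.
Qed.

Lemma Cmul_Cinv_r k w : k <> C0 -> Cmul k (Cmul (Cinv k) w) = w.
Proof.
  intro Hk; pose proof (Cnorm2_pos k Hk) as Hn.
  destruct k as [x y], w as [u v]; unfold Cinv, Cmul, Cnorm2 in *; simpl in *.
  f_equal; field; lra.
Qed.

Lemma Cconj_add a b : Cconj (Cadd a b) = Cadd (Cconj a) (Cconj b).
Proof. destruct a, b; unfold Cconj, Cadd; simpl; f_equal; ring. Qed.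
Lemma Cconj_mul a b : Cconj (Cmul a b) = Cmul (Cconj a) (Cconj b).
Proof. destruct a, b; unfold Cconj, Cmul; simpl; f_equal; ring. Qed.
Lemma Cconj_opp a : Cconj (Copp a) = Copp (Cconj a).
Proof. destruct a; unfold Cconj, Copp; simpl; f_equal; ring. Qed.
Lemma Cconj_sub a b : Cconj (Csub a b) = Csub (Cconj a) (Cconj b).
Proof. unfold Csub; now rewrite Cconj_add, Cconj_opp. Qed.
Lemma Cconj_inv a : Cconj (Cinv a) = Cinv (Cconj a).
Proof.
  destruct a as [x y]; unfold Cconj, Cinv, Cnorm2; simpl.
  replace (x * x + - y * - y) with (x * x + y * y) by ring.
  f_equal; unfold Rdiv; ring.
Qed.
Lemma Cconj_div a b : Cconj (Cdiv a b) = Cdiv (Cconj a) (Cconj b).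
Proof. unfold Cdiv; now rewrite Cconj_mul, Cconj_inv. Qed.
Lemma Cconj_involutive a : Cconj (Cconj a) = a.
Proof. destruct a; unfold Cconj; simpl; f_equal; ring. Qed.
Lemma Cconj_RtoC x : Cconj (RtoC x) = RtoC x.
Proof. unfold Cconj, RtoC; simpl; f_equal; ring. Qed.
Lemma Re_Copp a : Re (Copp a) = - Re a.
Proof. reflexivity. Qed.
Lemma Cinv_opp a : Cinv (Copp a) = Copp (Cinv a).
Proof.
  destruct a as [x y]; unfold Cinv, Copp, Cnorm2; simpl.
  replace (- x * - x + - y * - y) with (x * x + y * y) by ring.
  f_equal; unfold Rdiv; ring.
Qed.
Lemma Cinv_RtoC x : Cinv (RtoC x) = RtoC (/ x).
Proof.
  destruct (Req_dec x 0) as [->|Hx].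
  - unfold Cinv, RtoC, Cnorm2; simpl; rewrite Rinv_0; f_equal; unfold Rdiv; ring.
  - unfold Cinv, RtoC, Cnorm2; simpl; f_equal; field; auto.
Qed.

Lemma RtoC_mul x y : Cmul (RtoC x) (RtoC y) = RtoC (x * y).
Proof. unfold Cmul, RtoC; simpl; f_equal; ring. Qed.

(** * Derivatives along real paths *)

Definition is_cderiv_within (S : Cx -> Prop) (f : Cx -> Cx) (z a : Cx) : Prop :=
  forall eps : R, 0 < eps -> exists del : R, 0 < del /\
    forall h : Cx, h <> C0 -> Cnorm h < del -> S (Cadd z h) ->
      Cnorm (Csub (Cmul (Cinv h) (Csub (f (Cadd z h)) (f z))) a) < eps.

Lemma Cnorm_le_Mnorm M :
  Cnorm (m11 M) <= Mnorm M /\ Cnorm (m12 M) <= Mnorm M /\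
  Cnorm (m21 M) <= Mnorm M /\ Cnorm (m22 M) <= Mnorm M.
Proof.
  unfold Mnorm; pose proof (Cnorm_ge0 (m11 M)); pose proof (Cnorm_ge0 (m12 M)).
  pose proof (Cnorm_ge0 (m21 M)); pose proof (Cnorm_ge0 (m22 M)); lra.
Qed.

Lemma is_deriv_within_entries S F z d : is_deriv_within S F z d ->
  is_cderiv_within S (fun w => m11 (F w)) z (m11 d) /\
  is_cderiv_within S (fun w => m12 (F w)) z (m12 d) /\
  is_cderiv_within S (fun w => m21 (F w)) z (m21 d) /\
  is_cderiv_within S (fun w => m22 (F w)) z (m22 d).
Proof.
  intro HF; repeat split; intros eps Heps; destruct (HF eps Heps) as [del [Hdel Hh]];
    exists del; split; auto; intros h H1 H2 H3; specialize (Hh h H1 H2 H3);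
    destruct (Cnorm_le_Mnorm (Msub (Mscale (Cinv h) (Msub (F (Cadd z h)) (F z))) d))
      as [? [? [? ?]]]; simpl in *; lra.
Qed.

Lemma is_cderiv_within_increment S f z a eta :
  is_cderiv_within S f z a -> 0 < eta ->
  exists del, 0 < del /\ forall k, Cnorm k < del -> S (Cadd z k) ->
    exists e, Cnorm e < eta /\ Csub (f (Cadd z k)) (f z) = Cmul k (Cadd a e).
Proof.
  intros Hf Heta; destruct (Hf eta Heta) as [del [Hdel Hquot]].
  exists del; split; auto; intros k Hknorm HSk.
  destruct (Req_dec (Cnorm2 k) 0) as [Hk0|Hk0].
  - apply Req_le, Cnorm2_le0 in Hk0; subst k; exists C0; split.
    + change C0 with (RtoC 0); rewrite Cnorm_RtoC, Rabs_R0; lra.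
    + replace (Cadd z C0) with z by ring; ring.
  - set (e := Csub (Cmul (Cinv k) (Csub (f (Cadd z k)) (f z))) a).
    assert (Hk : k <> C0) by (intros ->; apply Hk0; unfold Cnorm2, C0; simpl; ring).
    exists e; split; [now apply Hquot|].
    replace (Cadd a e) with (Cmul (Cinv k) (Csub (f (Cadd z k)) (f z))) by (unfold e; ring).
    now rewrite Cmul_Cinv_r.
Qed.

Definition is_path_deriv (g : R -> Cx) (s : R) (v : Cx) : Prop :=
  derivable_pt_lim (fun t => Re (g t)) s (Re v) /\
  derivable_pt_lim (fun t => Im (g t)) s (Im v).

Definition path_quotient (g : R -> Cx) (s h : R) : Cx :=
  Cmul (RtoC (/ h)) (Csub (g (s + h)) (g s)).

Lemma is_path_deriv_quotient g s v :
  is_path_deriv g s v <->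
  forall eps, 0 < eps -> exists del, 0 < del /\ forall h, h <> 0 -> Rabs h < del ->
    Cnorm (Csub (path_quotient g s h) v) < eps.
Proof.
  assert (Hparts : forall h, Re (Csub (path_quotient g s h) v) =
                               (Re (g (s + h)) - Re (g s)) / h - Re v /\
                             Im (Csub (path_quotient g s h) v) =
                               (Im (g (s + h)) - Im (g s)) / h - Im v).
  { intro h; unfold path_quotient, Re, Im, Csub, Cadd, Copp, Cmul, RtoC; simpl.
    split; unfold Rdiv; ring. }
  split.
  - intros [Hre Him] eps Heps.
    destruct (Hre (eps / 2) ltac:(lra)) as [d1 H1].
    destruct (Him (eps / 2) ltac:(lra)) as [d2 H2].
    exists (Rmin d1 d2); split; [apply Rmin_glb_lt; apply cond_pos|].
    intros h Hh0 Hh; destruct (Hparts h) as [Ere Eim].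
    apply Cnorm_lt_of_parts; rewrite ?Ere, ?Eim.
    + apply H1; auto; eapply Rlt_le_trans; [exact Hh|apply Rmin_l].
    + apply H2; auto; eapply Rlt_le_trans; [exact Hh|apply Rmin_r].
  - intros Hq; split; intros eps Heps; destruct (Hq eps Heps) as [del [Hdel Hh]];
      exists (mkposreal del Hdel); intros h Hh0 Hlt; specialize (Hh h Hh0 Hlt);
      destruct (Hparts h) as [Ere Eim]; destruct (Rabs_Re_Im_le (Csub (path_quotient g s h) v));
      cbv beta; rewrite <- ?Ere, <- ?Eim; lra.
Qed.

Lemma path_quotient_increment g s h : h <> 0 ->
  Csub (g (s + h)) (g s) = Cmul (RtoC h) (path_quotient g s h).
Proof.
  intro Hh; unfold path_quotient.
  replace (Cmul (RtoC h) (Cmul (RtoC (/ h)) (Csub (g (s + h)) (g s))))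
    with (Cmul (Cmul (RtoC h) (RtoC (/ h))) (Csub (g (s + h)) (g s))) by ring.
  rewrite RtoC_mul, Rinv_r by auto; change (RtoC 1) with C1; ring.
Qed.

Lemma chain_rule_error a v q e eps : 0 < eps ->
  Cnorm (Csub q v) < Rmin 1 (eps / (2 * (Cnorm a + 1))) ->
  Cnorm e < eps / (2 * (Cnorm v + 2)) ->
  Cnorm (Csub (Cmul q (Cadd a e)) (Cmul a v)) < eps.
Proof.
  intros Heps Hq He.
  set (A := Cnorm a) in *; set (V := Cnorm v) in *.
  assert (HA : 0 <= A) by apply Cnorm_ge0; assert (HV : 0 <= V) by apply Cnorm_ge0.
  pose proof (Rmin_l 1 (eps / (2 * (A + 1)))); pose proof (Rmin_r 1 (eps / (2 * (A + 1)))).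
  assert (Hqnorm : Cnorm q <= V + 1).
  { replace q with (Cadd v (Csub q v)) by ring.
    eapply Rle_trans; [apply Cnorm_add_le|]; unfold V; lra. }
  replace (Csub (Cmul q (Cadd a e)) (Cmul a v)) with (Cadd (Cmul a (Csub q v)) (Cmul q e))
    by ring.
  eapply Rle_lt_trans; [apply Cnorm_add_le|]; rewrite !Cnorm_mul; fold A.
  pose proof (Cnorm_ge0 (Csub q v)); pose proof (Cnorm_ge0 e); pose proof (Cnorm_ge0 q).
  assert (A * Cnorm (Csub q v) <= A * (eps / (2 * (A + 1)))) by (apply Rmult_le_compat_l; lra).
  assert (A * (eps / (2 * (A + 1))) < eps / 2)
    by (apply (Rmult_lt_reg_r (2 * (A + 1))); [lra|]; field_simplify; [nra|lra]).
  assert (Cnorm q * Cnorm e <= (V + 1) * (eps / (2 * (V + 2))))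
    by (apply Rmult_le_compat; lra).
  assert ((V + 1) * (eps / (2 * (V + 2))) < eps / 2)
    by (apply (Rmult_lt_reg_r (2 * (V + 2))); [lra|]; field_simplify; [nra|lra]).
  lra.
Qed.

Lemma is_path_deriv_comp S f g a v s lo hi :
  lo < s < hi -> (forall t, lo < t < hi -> S (g t)) ->
  is_path_deriv g s v -> is_cderiv_within S f (g s) a ->
  is_path_deriv (fun t => f (g t)) s (Cmul a v).
Proof.
  intros Hs HS Hg Hf; apply is_path_deriv_quotient; intros eps Heps.
  set (V := Cnorm v); assert (HV : 0 <= V) by apply Cnorm_ge0.
  assert (Heta1 : 0 < Rmin 1 (eps / (2 * (Cnorm a + 1)))).
  { pose proof (Cnorm_ge0 a); apply Rmin_glb_lt; [lra|apply Rdiv_lt_0_compat; lra]. }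
  assert (Heta2 : 0 < eps / (2 * (V + 2))) by (apply Rdiv_lt_0_compat; lra).
  destruct (proj1 (is_path_deriv_quotient g s v) Hg _ Heta1) as [d1 [Hd1 Hq]].
  destruct (is_cderiv_within_increment S f (g s) a _ Hf Heta2) as [df [Hdf Hinc]].
  exists (Rmin (Rmin d1 (df / (V + 2))) (Rmin (s - lo) (hi - s))); split.
  { repeat apply Rmin_glb_lt; try apply Rdiv_lt_0_compat; lra. }
  intros h Hh0 Hh.
  pose proof (Rmin_l (Rmin d1 (df / (V + 2))) (Rmin (s - lo) (hi - s))).
  pose proof (Rmin_r (Rmin d1 (df / (V + 2))) (Rmin (s - lo) (hi - s))).
  pose proof (Rmin_l d1 (df / (V + 2))); pose proof (Rmin_r d1 (df / (V + 2))).
  pose proof (Rmin_l (s - lo) (hi - s)); pose proof (Rmin_r (s - lo) (hi - s)).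
  assert (Hh3 : lo < s + h < hi).
  { assert (Hlo : Rabs h < s - lo) by lra; assert (Hhi : Rabs h < hi - s) by lra.
    apply Rabs_def2 in Hlo; apply Rabs_def2 in Hhi; lra. }
  specialize (Hq h Hh0 ltac:(lra)); set (q := path_quotient g s h) in *.
  assert (Hknorm : Cnorm (Cmul (RtoC h) q) < df).
  { assert (Cnorm q <= V + 2).
    { replace q with (Cadd v (Csub q v)) by ring.
      eapply Rle_trans; [apply Cnorm_add_le|]; pose proof (Rmin_l 1 (eps / (2 * (Cnorm a + 1)))).
      unfold V; lra. }
    rewrite Cnorm_mul, Cnorm_RtoC; pose proof (Rabs_pos h); pose proof (Cnorm_ge0 q).
    apply (Rle_lt_trans _ (Rabs h * (V + 2))); [apply Rmult_le_compat_l; lra|].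
    replace df with (df / (V + 2) * (V + 2)) by (field; lra).
    apply Rmult_lt_compat_r; lra. }
  assert (Hpt : Cadd (g s) (Cmul (RtoC h) q) = g (s + h))
    by (unfold q; rewrite <- path_quotient_increment by auto; ring).
  destruct (Hinc _ Hknorm ltac:(rewrite Hpt; apply HS; auto)) as [e [He Hfe]].
  rewrite Hpt in Hfe.
  replace (path_quotient (fun t => f (g t)) s h) with (Cmul q (Cadd a e)).
  - now apply chain_rule_error.
  - unfold path_quotient; rewrite Hfe.
    replace (Cmul (RtoC (/ h)) (Cmul (Cmul (RtoC h) q) (Cadd a e)))
      with (Cmul (Cmul (RtoC (/ h)) (RtoC h)) (Cmul q (Cadd a e))) by ring.
    rewrite RtoC_mul, Rinv_l by auto; change (RtoC 1) with C1; ring.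
Qed.

Lemma is_path_deriv_const c s : is_path_deriv (fun _ => c) s C0.
Proof. split; apply derivable_pt_lim_const. Qed.

Lemma is_path_deriv_add f g s a b :
  is_path_deriv f s a -> is_path_deriv g s b ->
  is_path_deriv (fun t => Cadd (f t) (g t)) s (Cadd a b).
Proof.
  intros [F1 F2] [G1 G2]; split;
    apply (derivable_pt_lim_plus (fun t => _) (fun t => _)); auto.
Qed.

Lemma is_path_deriv_opp f s a :
  is_path_deriv f s a -> is_path_deriv (fun t => Copp (f t)) s (Copp a).
Proof. intros [F1 F2]; split; apply (derivable_pt_lim_opp (fun t => _)); auto. Qed.

Lemma is_path_deriv_sub f g s a b :
  is_path_deriv f s a -> is_path_deriv g s b ->
  is_path_deriv (fun t => Csub (f t) (g t)) s (Csub a b).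
Proof. intros; apply is_path_deriv_add; auto; now apply is_path_deriv_opp. Qed.

Lemma is_path_deriv_mul f g s a b :
  is_path_deriv f s a -> is_path_deriv g s b ->
  is_path_deriv (fun t => Cmul (f t) (g t)) s (Cadd (Cmul a (g s)) (Cmul (f s) b)).
Proof.
  intros [F1 F2] [G1 G2]; unfold Re, Im in *; split; simpl.
  - replace (fst a * fst (g s) - snd a * snd (g s) + (fst (f s) * fst b - snd (f s) * snd b))
      with ((fst a * fst (g s) + fst (f s) * fst b) - (snd a * snd (g s) + snd (f s) * snd b))
      by ring.
    apply (derivable_pt_lim_minus (fun t => fst (f t) * fst (g t))
                                  (fun t => snd (f t) * snd (g t)));
      apply (derivable_pt_lim_mult (fun t => _) (fun t => _)); auto.
  - replace (fst a * snd (g s) + snd a * fst (g s) + (fst (f s) * snd b + snd (f s) * fst b))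
      with ((fst a * snd (g s) + fst (f s) * snd b) + (snd a * fst (g s) + snd (f s) * fst b))
      by ring.
    apply (derivable_pt_lim_plus (fun t => fst (f t) * snd (g t))
                                 (fun t => snd (f t) * fst (g t)));
      apply (derivable_pt_lim_mult (fun t => _) (fun t => _)); auto.
Qed.

Lemma is_path_deriv_conj f s a :
  is_path_deriv f s a -> is_path_deriv (fun t => Cconj (f t)) s (Cconj a).
Proof. intros [F1 F2]; split; [exact F1|apply (derivable_pt_lim_opp (fun t => _)); auto]. Qed.

Lemma is_path_deriv_eq f s a b : a = b -> is_path_deriv f s a -> is_path_deriv f s b.
Proof. now intros ->. Qed.

Lemma is_path_deriv_RtoC_scal c s :
  is_path_deriv (fun t => RtoC (c * t)) s (RtoC c).
Proof.
  split; unfold Re, Im, RtoC; simpl.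
  - pose proof (derivable_pt_lim_scal id c s 1 (derivable_pt_lim_id s)) as H.
    rewrite Rmult_1_r in H; exact H.
  - apply (derivable_pt_lim_const 0).
Qed.

Lemma is_path_deriv_Cpolar r s :
  is_path_deriv (Cpolar r) s (Cmul Ci (Cpolar r s)).
Proof.
  split; unfold Re, Im, Cpolar, Ci, Cmul; simpl.
  - replace (0 * (r * cos s) - 1 * (r * sin s)) with (r * - sin s) by ring.
    apply (derivable_pt_lim_scal cos r s), derivable_pt_lim_cos.
  - replace (0 * (r * sin s) + 1 * (r * cos s)) with (r * cos s) by ring.
    apply (derivable_pt_lim_scal sin r s), derivable_pt_lim_sin.
Qed.

Definition Madd (A B : M2) : M2 :=
  mkM2 (Cadd (m11 A) (m11 B)) (Cadd (m12 A) (m12 B))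
       (Cadd (m21 A) (m21 B)) (Cadd (m22 A) (m22 B)).

Definition Madj (M : M2) : M2 :=
  mkM2 (m22 M) (Copp (m12 M)) (Copp (m21 M)) (m11 M).

Definition is_mpath_deriv (G : R -> M2) (s : R) (V : M2) : Prop :=
  is_path_deriv (fun t => m11 (G t)) s (m11 V) /\
  is_path_deriv (fun t => m12 (G t)) s (m12 V) /\
  is_path_deriv (fun t => m21 (G t)) s (m21 V) /\
  is_path_deriv (fun t => m22 (G t)) s (m22 V).

Lemma is_mpath_deriv_comp U X X' g v s lo hi :
  lo < s < hi -> (forall t, lo < t < hi -> U (g t)) ->
  is_path_deriv g s v -> is_deriv_within U X (g s) X' ->
  is_mpath_deriv (fun t => X (g t)) s (Mscale v X').
Proof.
  intros Hs HU Hg HX; destruct (is_deriv_within_entries _ _ _ _ HX) as [E11 [E12 [E21 E22]]].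
  refine (conj _ (conj _ (conj _ _))); (eapply is_path_deriv_eq;
    [|first [ exact (is_path_deriv_comp U (fun w => m11 (X w)) g _ v s lo hi Hs HU Hg E11)
            | exact (is_path_deriv_comp U (fun w => m12 (X w)) g _ v s lo hi Hs HU Hg E12)
            | exact (is_path_deriv_comp U (fun w => m21 (X w)) g _ v s lo hi Hs HU Hg E21)
            | exact (is_path_deriv_comp U (fun w => m22 (X w)) g _ v s lo hi Hs HU Hg E22) ]]);
    simpl; ring.
Qed.

Lemma is_mpath_deriv_mul F G s A B :
  is_mpath_deriv F s A -> is_mpath_deriv G s B ->
  is_mpath_deriv (fun t => Mmul (F t) (G t)) s (Madd (Mmul A (G s)) (Mmul (F s) B)).
Proof.
  intros [F11 [F12 [F21 F22]]] [G11 [G12 [G21 G22]]].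
  refine (conj _ (conj _ (conj _ _))); cbn [m11 m12 m21 m22 Mmul Madd];
    (eapply is_path_deriv_eq; [|apply is_path_deriv_add; apply is_path_deriv_mul; eassumption]);
    cbv beta; ring.
Qed.

Lemma is_mpath_deriv_adj F s A :
  is_mpath_deriv F s A -> is_mpath_deriv (fun t => Madj (F t)) s (Madj A).
Proof.
  intros [F11 [F12 [F21 F22]]].
  refine (conj _ (conj _ (conj _ _))); cbn [m11 m12 m21 m22 Madj];
    auto using is_path_deriv_opp.
Qed.

Lemma is_path_deriv_Cnorm2 g s v : is_path_deriv g s v ->
  derivable_pt_lim (fun t => Cnorm2 (g t)) s (2 * (Re (g s) * Re v + Im (g s) * Im v)).
Proof.
  intros [G1 G2]; unfold Cnorm2, Re, Im in *.
  replace (2 * (fst (g s) * fst v + snd (g s) * snd v)) with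
    ((fst v * fst (g s) + fst (g s) * fst v) + (snd v * snd (g s) + snd (g s) * snd v)) by ring.
  apply (derivable_pt_lim_plus (fun t => fst (g t) * fst (g t)) (fun t => snd (g t) * snd (g t)));
    apply (derivable_pt_lim_mult (fun t => _) (fun t => _)); auto.
Qed.

Section Dissipative.
Variables (g k : R -> Cx) (lo hi : R).
Hypothesis g_deriv : forall s, lo < s < hi -> is_path_deriv g s (Cmul (k s) (g s)).

Lemma dissipative_Cnorm2_le a b : lo < a <= b -> b < hi ->
  (forall s, a < s < b -> Re (k s) <= 0) -> Cnorm2 (g b) <= Cnorm2 (g a).
Proof.
  intros [Hlo Hab] Hhi Hk; destruct (Req_dec a b) as [->|Hne]; [lra|].
  destruct (MVT_cor2 (fun t => Cnorm2 (g t))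
     (fun c => 2 * (Re (g c) * Re (Cmul (k c) (g c)) + Im (g c) * Im (Cmul (k c) (g c)))) a b)
    as [c [Hc Hc2]]; [lra| |].
  - intros c Hc; apply is_path_deriv_Cnorm2, g_deriv; lra.
  - replace (2 * (Re (g c) * Re (Cmul (k c) (g c)) + Im (g c) * Im (Cmul (k c) (g c))))
      with (2 * Re (k c) * Cnorm2 (g c)) in Hc by (unfold Re, Im, Cmul, Cnorm2; simpl; ring).
    pose proof (Cnorm2_ge0 (g c)); pose proof (Hk c ltac:(lra)).
    assert (0 <= - (2 * Re (k c)) * Cnorm2 (g c) * (b - a))
      by (apply Rmult_le_pos; [apply Rmult_le_pos|]; lra).
    lra.
Qed.

Lemma dissipative_eq0_from a b : lo < a <= b -> b < hi ->
  (forall s, a < s < b -> Re (k s) <= 0) -> g a = C0 -> g b = C0.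
Proof.
  intros Hab Hb Hk Ha; apply Cnorm2_le0.
  pose proof (dissipative_Cnorm2_le a b Hab Hb Hk) as Hle; rewrite Ha in Hle.
  unfold Cnorm2, C0 in *; simpl in *; lra.
Qed.

Lemma dissipative_eq0_of_lim0 :
  (forall s, lo < s < hi -> Re (k s) <= 0) ->
  (forall eps, 0 < eps -> exists del, 0 < del /\
     forall s, lo < s < lo + del -> Cnorm (g s) < eps) ->
  forall s, lo < s < hi -> g s = C0.
Proof.
  intros Hk Hlim s Hs; apply Cnorm2_le0.
  destruct (Rle_or_lt (Cnorm2 (g s)) 0) as [H|Hpos]; auto; exfalso.
  destruct (Hlim (sqrt (Cnorm2 (g s)))) as [del [Hdel Hsmall]]; [now apply sqrt_lt_R0|].
  set (a := Rmin (lo + del / 2) s).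
  assert (Ha : lo < a <= s) by (split; [apply Rmin_glb_lt|apply Rmin_r]; lra).
  assert (Hadel : a < lo + del) by (eapply Rle_lt_trans; [apply Rmin_l|lra]).
  pose proof (Hsmall a ltac:(lra)) as Hga.
  pose proof (dissipative_Cnorm2_le a s Ha (proj2 Hs) ltac:(intros; apply Hk; lra)) as Hle.
  rewrite (Cnorm2_sqr (g a)) in Hle; pose proof (Cnorm_ge0 (g a)).
  assert (Cnorm (g a) * Cnorm (g a) < sqrt (Cnorm2 (g s)) * sqrt (Cnorm2 (g s)))
    by (apply Rmult_le_0_lt_compat; lra).
  rewrite sqrt_sqrt in * by lra; lra.
Qed.
End Dissipative.

(** * The reflection symmetry of (L) *)

Definition normalizing_rhs (om mu : R) (l : Z) (H : Cx -> M2) (z : Cx) : M2 :=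
  Msub (Mmul (A_L om mu l z) (H z)) (Mmul (H z) (D_L mu l z)).

(* [J conj(M) J] with [J = diag(1, -1)]. *)
Definition Mreflect (M : M2) : M2 :=
  mkM2 (Cconj (m11 M)) (Copp (Cconj (m12 M))) (Copp (Cconj (m21 M))) (Cconj (m22 M)).

Definition reflected (H : Cx -> M2) (z : Cx) : M2 := Mreflect (H (Cconj z)).

Lemma Mreflect_Msub A B : Mreflect (Msub A B) = Msub (Mreflect A) (Mreflect B).
Proof. unfold Mreflect, Msub; simpl; rewrite !Cconj_sub; f_equal; ring. Qed.

Lemma Mreflect_Mscale c M : Mreflect (Mscale c M) = Mscale (Cconj c) (Mreflect M).
Proof. unfold Mreflect, Mscale; simpl; rewrite !Cconj_mul; f_equal; ring. Qed.

Lemma Mreflect_Mid : Mreflect Mid = Mid.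
Proof. unfold Mreflect, Mid; simpl; f_equal; unfold Cconj, Copp, C0, C1; simpl; f_equal; ring. Qed.

Lemma Mnorm_Mreflect M : Mnorm (Mreflect M) = Mnorm M.
Proof. unfold Mnorm, Mreflect; simpl; now rewrite !Cnorm_opp, !Cnorm_conj. Qed.

Lemma Cdiv_opp_l a b : Cdiv (Copp a) b = Copp (Cdiv a b).
Proof. unfold Cdiv; ring. Qed.

Lemma Cdiv_opp_r a b : Cdiv a (Copp b) = Copp (Cdiv a b).
Proof. unfold Cdiv; rewrite Cinv_opp; ring. Qed.

Lemma Cconj_two_i_om om : Cconj (two_i_om om) = Copp (two_i_om om).
Proof. unfold Cconj, two_i_om, Copp; simpl; f_equal; ring. Qed.

Lemma Cconj_polyL_conj mu l z : Cconj (polyL mu l (Cconj z)) = polyL mu l z.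
Proof. destruct z; unfold polyL, Cconj, Copp, Cadd, Cmul, RtoC, C1; simpl; f_equal; ring. Qed.

Lemma Mreflect_A_L_conj om mu l z : Mreflect (A_L om mu l (Cconj z)) = A_L om mu l z.
Proof.
  unfold Mreflect, A_L; cbn [m11 m12 m21 m22]; f_equal.
  - now rewrite Cconj_div, Cconj_polyL_conj, Cconj_mul, Cconj_involutive.
  - rewrite !Cconj_div, Cconj_mul, Cconj_involutive, Cconj_two_i_om, Cdiv_opp_r, Cdiv_opp_l.
    ring.
  - rewrite Cconj_div, Cconj_mul, Cconj_involutive, Cconj_two_i_om.
    replace (Cmul (Copp (two_i_om om)) z) with (Copp (Cmul (two_i_om om) z)) by ring.
    replace (Cconj C1) with C1 by (unfold Cconj, C1; simpl; f_equal; ring).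
    rewrite Cdiv_opp_r; ring.
  - unfold Cconj, C0; simpl; f_equal; ring.
Qed.

Lemma Mreflect_D_L_conj mu l z : Mreflect (D_L mu l (Cconj z)) = D_L mu l z.
Proof.
  unfold Mreflect, D_L; cbn [m11 m12 m21 m22]; f_equal;
    try (unfold Cconj, Copp, C0; simpl; f_equal; ring).
  now rewrite Cconj_div, Cconj_polyL_conj, Cconj_mul, Cconj_involutive.
Qed.

Lemma Mreflect_Mmul A B : Mreflect (Mmul A B) = Mmul (Mreflect A) (Mreflect B).
Proof.
  unfold Mreflect, Mmul; cbn [m11 m12 m21 m22];
    rewrite ?Cconj_add, ?Cconj_mul; f_equal; ring.
Qed.

Lemma Mreflect_normalizing_rhs om mu l H z :
  Mreflect (normalizing_rhs om mu l H (Cconj z)) = normalizing_rhs om mu l (reflected H) z.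
Proof.
  unfold normalizing_rhs, reflected.
  now rewrite Mreflect_Msub, !Mreflect_Mmul, Mreflect_A_L_conj, Mreflect_D_L_conj.
Qed.

Lemma is_deriv_within_reflected S H z d :
  is_deriv_within S H (Cconj z) d ->
  is_deriv_within (fun w => S (Cconj w)) (reflected H) z (Mreflect d).
Proof.
  intros HH eps Heps; destruct (HH eps Heps) as [del [Hdel Hquot]].
  exists del; split; auto; intros h Hh0 Hh HS.
  assert (Hc0 : Cconj h <> C0).
  { intro E; apply Hh0; rewrite <- (Cconj_involutive h), E.
    unfold Cconj, C0; simpl; f_equal; ring. }
  rewrite Cconj_add in HS.
  specialize (Hquot (Cconj h) Hc0 ltac:(now rewrite Cnorm_conj) HS).
  unfold reflected; rewrite Cconj_add, <- (Cconj_involutive (Cinv h)), Cconj_inv,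
    <- Mreflect_Msub, <- Mreflect_Mscale, <- Mreflect_Msub, Mnorm_Mreflect.
  exact Hquot.
Qed.

Lemma reflected_solves S H om mu l :
  (forall z, S z -> is_deriv_within S H z (normalizing_rhs om mu l H z)) ->
  forall z, S (Cconj z) -> is_deriv_within (fun w => S (Cconj w)) (reflected H) z
                             (normalizing_rhs om mu l (reflected H) z).
Proof.
  intros HS z Hz; rewrite <- Mreflect_normalizing_rhs.
  exact (is_deriv_within_reflected _ _ _ _ (HS _ Hz)).
Qed.

(** * The matrix [adj(X) Y] for two normalizing transformations *)

Lemma Mnorm_ge0 M : 0 <= Mnorm M.
Proof. pose proof (Cnorm_le_Mnorm M) as [H _]; pose proof (Cnorm_ge0 (m11 M)); lra. Qed.

Lemma Mnorm_add_le A B : Mnorm (Madd A B) <= Mnorm A + Mnorm B.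
Proof.
  unfold Mnorm, Madd; simpl.
  pose proof (Cnorm_add_le (m11 A) (m11 B)); pose proof (Cnorm_add_le (m12 A) (m12 B)).
  pose proof (Cnorm_add_le (m21 A) (m21 B)); pose proof (Cnorm_add_le (m22 A) (m22 B)); lra.
Qed.

Lemma Mnorm_mul_le A B : Mnorm (Mmul A B) <= Mnorm A * Mnorm B.
Proof.
  destruct A as [a11 a12 a21 a22], B as [b11 b12 b21 b22]; unfold Mnorm, Mmul; simpl.
  assert (Hentry : forall p q u w, Cnorm (Cadd (Cmul p q) (Cmul u w)) <=
                                   Cnorm p * Cnorm q + Cnorm u * Cnorm w).
  { intros; rewrite <- !Cnorm_mul; apply Cnorm_add_le. }
  pose proof (Hentry a11 b11 a12 b21); pose proof (Hentry a11 b12 a12 b22).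
  pose proof (Hentry a21 b11 a22 b21); pose proof (Hentry a21 b12 a22 b22).
  pose proof (Cnorm_ge0 a11); pose proof (Cnorm_ge0 a12);
  pose proof (Cnorm_ge0 a21); pose proof (Cnorm_ge0 a22);
  pose proof (Cnorm_ge0 b11); pose proof (Cnorm_ge0 b12);
  pose proof (Cnorm_ge0 b21); pose proof (Cnorm_ge0 b22).
  nra.
Qed.

Lemma Mnorm_Madj M : Mnorm (Madj M) = Mnorm M.
Proof. unfold Mnorm, Madj; simpl; rewrite !Cnorm_opp; ring. Qed.

Lemma Mnorm_Madj_mul_sub_id A B e : 0 < e <= 1 ->
  Mnorm (Msub A Mid) < e -> Mnorm (Msub B Mid) < e ->
  Mnorm (Msub (Mmul (Madj A) B) Mid) < 3 * e.
Proof.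
  intros He HA HB.
  set (a := Msub (Madj A) Mid); set (b := Msub B Mid) in *.
  assert (Ha : Mnorm a < e).
  { replace a with (Madj (Msub A Mid)) by (destruct A; unfold a, Madj, Msub, Mid; simpl;
      f_equal; ring).
    now rewrite Mnorm_Madj. }
  replace (Msub (Mmul (Madj A) B) Mid) with (Madd (Mmul a b) (Madd a b))
    by (destruct A, B; unfold a, b, Madd, Madj, Mmul, Msub, Mid; simpl; f_equal; ring).
  eapply Rle_lt_trans; [apply Mnorm_add_le|].
  pose proof (Mnorm_mul_le a b); pose proof (Mnorm_add_le a b).
  pose proof (Mnorm_ge0 a); pose proof (Mnorm_ge0 b).
  assert (Mnorm a * Mnorm b <= e * e) by (apply Rmult_le_compat; lra).
  assert (e * e <= e) by nra.
  lra.
Qed.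

Definition tends_to_id (K : Cx -> Prop) (X : Cx -> M2) : Prop :=
  forall e, 0 < e -> exists d, 0 < d /\
    forall y, K y -> Cnorm y < d -> Mnorm (Msub (X y) Mid) < e.

Lemma smooth_up_to_tends_to_id U K H :
  smooth_up_to U K H -> K C0 -> H C0 = Mid -> tends_to_id K H.
Proof.
  intros [Hn [E [_ Hcont]]] K0 H0 e He.
  destruct (Hcont O C0 K0 e He) as [d [Hd Hy]]; exists d; split; auto.
  intros y Ky Hyd; rewrite E, H0 in Hy; apply Hy; auto.
  now replace (Csub y C0) with y by ring.
Qed.

Lemma normalizing_solves_tends_to_id om mu l S K H : normalizing om mu l S K H -> K C0 ->
  (forall z, S z -> is_deriv_within S H z (normalizing_rhs om mu l H z)) /\ tends_to_id K H.
Proof.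
  intros [Hsmooth [H0 [_ Hsol]]] K0; split; [exact Hsol|].
  exact (smooth_up_to_tends_to_id _ _ _ Hsmooth K0 H0).
Qed.

Lemma tends_to_id_reflected K H :
  tends_to_id K H -> tends_to_id (fun z => K (Cconj z)) (reflected H).
Proof.
  intros HH e He; destruct (HH e He) as [d [Hd Hy]]; exists d; split; auto.
  intros y Ky Hyd; unfold reflected.
  rewrite <- Mreflect_Mid, <- Mreflect_Msub, Mnorm_Mreflect.
  apply Hy; auto; now rewrite Cnorm_conj.
Qed.

Definition adjprod (X Y : Cx -> M2) (z : Cx) : M2 := Mmul (Madj (X z)) (Y z).

Lemma tends_to_id_adjprod K X Y :
  tends_to_id K X -> tends_to_id K Y -> tends_to_id K (adjprod X Y).
Proof.
  intros HX HY eps Heps.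
  set (e := Rmin 1 (eps / 3)).
  assert (He : 0 < e <= 1) by (split; [apply Rmin_glb_lt|apply Rmin_l]; lra).
  assert (He3 : 3 * e <= eps) by (pose proof (Rmin_r 1 (eps / 3)); unfold e; lra).
  destruct (HX e (proj1 He)) as [d1 [Hd1 H1]]; destruct (HY e (proj1 He)) as [d2 [Hd2 H2]].
  exists (Rmin d1 d2); split; [now apply Rmin_glb_lt|].
  intros y Ky Hy; pose proof (Rmin_l d1 d2); pose proof (Rmin_r d1 d2).
  eapply Rlt_le_trans; [apply Mnorm_Madj_mul_sub_id|exact He3]; auto.
  - apply H1; auto; lra.
  - apply H2; auto; lra.
Qed.

Lemma is_mpath_deriv_eq F s A B : A = B -> is_mpath_deriv F s A -> is_mpath_deriv F s B.
Proof. now intros ->. Qed.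

Lemma Cnorm_entries_le_Mnorm_sub_id M :
  Cnorm (Csub (m11 M) C1) <= Mnorm (Msub M Mid) /\ Cnorm (m12 M) <= Mnorm (Msub M Mid) /\
  Cnorm (m21 M) <= Mnorm (Msub M Mid) /\ Cnorm (Csub (m22 M) C1) <= Mnorm (Msub M Mid).
Proof.
  destruct (Cnorm_le_Mnorm (Msub M Mid)) as [H11 [H12 [H21 H22]]].
  replace (m12 M) with (m12 (Msub M Mid)) by (simpl; ring).
  replace (m21 M) with (m21 (Msub M Mid)) by (simpl; ring).
  exact (conj H11 (conj H12 (conj H21 H22))).
Qed.

Definition rateL (mu : R) (l : Z) (z : Cx) : Cx := m11 (D_L mu l z).

Section AdjointProductAlongPath.
Variables (om mu : R) (l : Z) (U : Cx -> Prop) (X Y : Cx -> M2) (g dg : R -> Cx) (lo hi : R).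
Hypothesis X_sol : forall z, U z -> is_deriv_within U X z (normalizing_rhs om mu l X z).
Hypothesis Y_sol : forall z, U z -> is_deriv_within U Y z (normalizing_rhs om mu l Y z).
Hypothesis g_in : forall t, lo < t < hi -> U (g t).
Hypothesis g_deriv : forall t, lo < t < hi -> is_path_deriv g t (dg t).

Let Z (t : R) : M2 := adjprod X Y (g t).

(* This holds because [tr A_L = tr D_L]. *)
Lemma adjprod_path_deriv s : lo < s < hi ->
  is_mpath_deriv Z s
    (Mscale (dg s) (Msub (Mmul (D_L mu l (g s)) (Z s)) (Mmul (Z s) (D_L mu l (g s))))).
Proof.
  intro Hs; unfold Z, adjprod.
  eapply is_mpath_deriv_eq; [|apply is_mpath_deriv_mul; [apply is_mpath_deriv_adj|];
    eapply is_mpath_deriv_comp; eauto].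
  unfold normalizing_rhs, A_L, D_L.
  destruct (X (g s)), (Y (g s)); unfold Madd, Madj, Mmul, Msub, Mscale; simpl.
  f_equal; ring.
Qed.

Lemma adjprod_entries_path_deriv s : lo < s < hi ->
  is_path_deriv (fun t => Csub (m11 (Z t)) C1) s (Cmul C0 (Csub (m11 (Z s)) C1)) /\
  is_path_deriv (fun t => Csub (m22 (Z t)) C1) s (Cmul C0 (Csub (m22 (Z s)) C1)) /\
  is_path_deriv (fun t => m12 (Z t)) s (Cmul (Cmul (rateL mu l (g s)) (dg s)) (m12 (Z s))) /\
  is_path_deriv (fun t => m21 (Z t)) s
    (Cmul (Copp (Cmul (rateL mu l (g s)) (dg s))) (m21 (Z s))).
Proof.
  intro Hs; destruct (adjprod_path_deriv s Hs) as [D11 [D12 [D21 D22]]].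
  unfold rateL, D_L in *; cbn [m11 m12 m21 m22 Mmul Msub Mscale] in *.
  refine (conj _ (conj _ (conj _ _)));
    first [ eapply is_path_deriv_eq; [|apply is_path_deriv_sub;
              [eassumption|apply is_path_deriv_const]]
          | eapply is_path_deriv_eq; [|eassumption] ];
    ring.
Qed.

Section NearTheOrigin.
Hypothesis Z_to_id : forall eps, 0 < eps -> exists del, 0 < del /\
  forall s, lo < s < lo + del -> Mnorm (Msub (Z s) Mid) < eps.

Let entry_tends_to (f : M2 -> Cx) :
  (forall M, Cnorm (f M) <= Mnorm (Msub M Mid)) ->
  forall eps, 0 < eps -> exists del, 0 < del /\
    forall s, lo < s < lo + del -> Cnorm (f (Z s)) < eps.
Proof.
  intros Hf eps Heps; destruct (Z_to_id eps Heps) as [del [Hdel Hs]].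
  exists del; split; auto; intros s Hs'; eapply Rle_lt_trans; [apply Hf|auto].
Qed.

Lemma adjprod_diag_eq1 s : lo < s < hi -> m11 (Z s) = C1 /\ m22 (Z s) = C1.
Proof.
  intro Hs.
  assert (Hconst : forall f : M2 -> Cx,
    (forall M, Cnorm (Csub (f M) C1) <= Mnorm (Msub M Mid)) ->
    (forall t, lo < t < hi ->
       is_path_deriv (fun t => Csub (f (Z t)) C1) t (Cmul C0 (Csub (f (Z t)) C1))) ->
    f (Z s) = C1).
  { intros f Hf Hd.
    assert (E : Csub (f (Z s)) C1 = C0).
    { apply (dissipative_eq0_of_lim0 (fun t => Csub (f (Z t)) C1) (fun _ => C0) lo hi); auto.
      - intros; unfold Re, C0; simpl; lra.
      - apply (entry_tends_to (fun M => Csub (f M) C1)); auto. }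
    replace (f (Z s)) with (Cadd (Csub (f (Z s)) C1) C1) by ring; rewrite E; ring. }
  split; apply Hconst; try (intros; apply adjprod_entries_path_deriv; auto);
    intro M; now destruct (Cnorm_entries_le_Mnorm_sub_id M) as [? [? [? ?]]].
Qed.

Lemma adjprod_12_eq0 :
  (forall t, lo < t < hi -> Re (Cmul (rateL mu l (g t)) (dg t)) <= 0) ->
  forall s, lo < s < hi -> m12 (Z s) = C0.
Proof.
  intro Hsign; apply (dissipative_eq0_of_lim0 (fun t => m12 (Z t))
    (fun t => Cmul (rateL mu l (g t)) (dg t))); auto.
  - intros; apply adjprod_entries_path_deriv; auto.
  - apply entry_tends_to; intro M; now destruct (Cnorm_entries_le_Mnorm_sub_id M) as [? [? [? ?]]].
Qed.

Lemma adjprod_21_eq0 :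
  (forall t, lo < t < hi -> 0 <= Re (Cmul (rateL mu l (g t)) (dg t))) ->
  forall s, lo < s < hi -> m21 (Z s) = C0.
Proof.
  intro Hsign; apply (dissipative_eq0_of_lim0 (fun t => m21 (Z t))
    (fun t => Copp (Cmul (rateL mu l (g t)) (dg t)))).
  - intros; apply adjprod_entries_path_deriv; auto.
  - intros t Ht; specialize (Hsign t Ht); rewrite Re_Copp; lra.
  - apply entry_tends_to; intro M; now destruct (Cnorm_entries_le_Mnorm_sub_id M) as [? [? [? ?]]].
Qed.

End NearTheOrigin.
Lemma adjprod_12_transport a b : lo < a <= b -> b < hi ->
  (forall t, a < t < b -> Re (Cmul (rateL mu l (g t)) (dg t)) <= 0) ->
  m12 (Z a) = C0 -> m12 (Z b) = C0.
Proof.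
  apply (dissipative_eq0_from (fun t => m12 (Z t))
    (fun t => Cmul (rateL mu l (g t)) (dg t)) lo hi).
  intros; apply adjprod_entries_path_deriv; auto.
Qed.

Lemma adjprod_21_transport a b : lo < a <= b -> b < hi ->
  (forall t, a < t < b -> 0 <= Re (Cmul (rateL mu l (g t)) (dg t))) ->
  m21 (Z a) = C0 -> m21 (Z b) = C0.
Proof.
  intros Hab Hb Hsign; apply (dissipative_eq0_from (fun t => m21 (Z t))
    (fun t => Copp (Cmul (rateL mu l (g t)) (dg t))) lo hi); auto.
  - intros; apply adjprod_entries_path_deriv; auto.
  - intros t Ht; specialize (Hsign t Ht); rewrite Re_Copp; lra.
Qed.
End AdjointProductAlongPath.

(** * The real axis and the half circles *)

Lemma Re_rateL_RtoC_nonpos mu l x : 0 < mu -> x <> 0 ->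
  Rabs x < mu / (Rabs (IZR l) + 1) -> Re (rateL mu l (RtoC x)) <= 0.
Proof.
  intros Hmu Hx Hsmall; pose proof (Rabs_pos (IZR l)) as Hl0.
  replace (Re (rateL mu l (RtoC x))) with (- (IZR l * x + mu * (1 + x * x)) / (x * x))
    by (unfold Re, rateL, D_L, Cdiv, Cinv, Cmul, polyL, Copp, Cadd, RtoC, Cnorm2, C1;
        simpl; field; auto).
  assert (Hlx : Rabs (IZR l * x) < mu).
  { rewrite Rabs_mult.
    apply (Rle_lt_trans _ (Rabs (IZR l) * (mu / (Rabs (IZR l) + 1)))).
    - apply Rmult_le_compat_l; lra.
    - apply (Rmult_lt_reg_r (Rabs (IZR l) + 1)); [lra|].
      field_simplify; lra. }
  apply Rabs_def2 in Hlx.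
  assert (0 < x * x) by (apply Rsqr_pos_lt; auto).
  assert (0 < / (x * x)) by (apply Rinv_0_lt_compat; auto).
  assert (0 < IZR l * x + mu * (1 + x * x)) by nra.
  unfold Rdiv; nra.
Qed.

Lemma Re_rateL_mul_Ci_nonneg mu l z : 0 < mu -> Im z <= 0 -> 0 < Cnorm2 z < 1 ->
  0 <= Re (Cmul (rateL mu l z) (Cmul Ci z)).
Proof.
  intros Hmu Hy [Hpos Hlt1].
  replace (Re (Cmul (rateL mu l z) (Cmul Ci z)))
    with (mu * (- Im z) * (1 - Cnorm2 z) / Cnorm2 z).
  - apply Rmult_le_pos; [apply Rmult_le_pos; [apply Rmult_le_pos|]|]; try lra.
    apply Rlt_le, Rinv_0_lt_compat; auto.
  - destruct z as [x y]; unfold Cnorm2 in *; simpl in *.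
    unfold rateL, D_L, Re, Im, Cdiv, Cinv, Cmul, polyL, Copp, Cadd, RtoC, Cnorm2, Ci, C1; simpl.
    assert (E : (x * x - y * y) * (x * x - y * y) + (x * y + y * x) * (x * y + y * x)
                = (x * x + y * y) * (x * x + y * y)) by ring.
    rewrite E; field; lra.
Qed.

Lemma Sector_ClSector al be z : Sector al be z -> ClSector al be z.
Proof. intros [r [th [Hr [Hth ->]]]]; right; exists r, th; repeat split; lra. Qed.

Lemma SectorConj_conj_Cpolar al be r th : 0 < r -> al < th < be ->
  SectorConj al be (Cconj (Cpolar r th)).
Proof. intros Hr Hth; exists r, th; now rewrite Cconj_involutive. Qed.

Lemma Cpolar_0 r : Cpolar r 0 = RtoC r.
Proof. unfold Cpolar, RtoC; rewrite cos_0, sin_0; f_equal; ring. Qed.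

Lemma Cpolar_PI r : Cpolar r PI = RtoC (- r).
Proof. unfold Cpolar, RtoC; rewrite cos_PI, sin_PI; f_equal; ring. Qed.

Lemma Sector_RtoC al be x : al < 0 -> PI < be -> x <> 0 -> Sector al be (RtoC x).
Proof.
  intros Hal Hbe Hx; pose proof PI_RGT_0.
  destruct (Rlt_or_le 0 x) as [Hpos|Hneg].
  - exists x, 0; repeat split; try lra; now rewrite Cpolar_0.
  - exists (- x), PI; repeat split; try lra; rewrite Cpolar_PI; f_equal; ring.
Qed.

Lemma SectorConj_RtoC al be x : al < 0 -> PI < be -> x <> 0 -> SectorConj al be (RtoC x).
Proof. intros; unfold SectorConj; rewrite Cconj_RtoC; now apply Sector_RtoC. Qed.

Lemma Sigma0_RtoC al be x : al < 0 -> PI < be -> x < 0 -> Sigma0 al be (RtoC x).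
Proof.
  intros; split; [|split]; [apply Sector_RtoC|apply SectorConj_RtoC|unfold Re, RtoC; simpl]; lra.
Qed.

Lemma Sigma1_RtoC al be x : al < 0 -> PI < be -> 0 < x -> Sigma1 al be (RtoC x).
Proof.
  intros; split; [|split]; [apply Sector_RtoC|apply SectorConj_RtoC|unfold Re, RtoC; simpl]; lra.
Qed.


Lemma M2_eq_Mid M : m11 M = C1 -> m12 M = C0 -> m21 M = C0 -> m22 M = C1 -> M = Mid.
Proof. destruct M; simpl; intros -> -> -> ->; reflexivity. Qed.

Lemma Re_Cmul_RtoC a c : Re (Cmul a (RtoC c)) = Re a * c.
Proof. unfold Re, Cmul, RtoC; simpl; ring. Qed.

Lemma Cnorm2_Cpolar r t : Cnorm2 (Cpolar r t) = r * r.
Proof. unfold Cnorm2, Cpolar; simpl; pose proof (sin2_cos2 t); unfold Rsqr in *; nra. Qed.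

Section NearTheRealAxis.
Variables (om mu : R) (l : Z) (al be : R) (X Y : Cx -> M2).
Hypothesis mu_pos : 0 < mu.
Hypothesis al_neg : al < 0.
Hypothesis be_gt_PI : PI < be.
Hypothesis X_sol : forall z, SectorConj al be z ->
  is_deriv_within (SectorConj al be) X z (normalizing_rhs om mu l X z).
Hypothesis Y_sol : forall z, SectorConj al be z ->
  is_deriv_within (SectorConj al be) Y z (normalizing_rhs om mu l Y z).

Section Axis.
Hypothesis X_id : tends_to_id (ClSectorConj al be) X.
Hypothesis Y_id : tends_to_id (ClSectorConj al be) Y.

Let t0 := mu / (Rabs (IZR l) + 1).

Let axis_in c : (c = 1 \/ c = -1) -> forall t, 0 < t < t0 -> SectorConj al be (RtoC (c * t)).
Proof. intros Hc t Ht; apply SectorConj_RtoC; auto; destruct Hc as [-> | ->]; lra. Qed.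

Let axis_to_id c : (c = 1 \/ c = -1) -> forall eps, 0 < eps -> exists del, 0 < del /\
  forall s, 0 < s < 0 + del -> Mnorm (Msub (adjprod X Y (RtoC (c * s))) Mid) < eps.
Proof.
  intros Hc eps Heps; destruct (tends_to_id_adjprod _ _ _ X_id Y_id eps Heps) as [d [Hd Hy]].
  exists d; split; auto; intros s Hs; apply Hy.
  - apply Sector_ClSector, SectorConj_RtoC; auto; destruct Hc as [-> | ->]; lra.
  - rewrite Cnorm_RtoC, Rabs_mult, Rabs_pos_eq with (x := s) by lra.
    destruct Hc as [-> | ->]; [rewrite Rabs_R1|rewrite Rabs_left by lra]; lra.
Qed.

Lemma adjprod_axis_diag c s : (c = 1 \/ c = -1) -> 0 < s < t0 ->
  m11 (adjprod X Y (RtoC (c * s))) = C1 /\ m22 (adjprod X Y (RtoC (c * s))) = C1.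
Proof.
  intros Hc; apply (adjprod_diag_eq1 om mu l (SectorConj al be) X Y
    (fun t => RtoC (c * t)) (fun _ => RtoC c) 0 t0);
    auto using is_path_deriv_RtoC_scal, axis_in, axis_to_id.
Qed.

Lemma adjprod_axis_12 s : 0 < s < t0 -> m12 (adjprod X Y (RtoC (1 * s))) = C0.
Proof.
  apply (adjprod_12_eq0 om mu l (SectorConj al be) X Y
    (fun t => RtoC (1 * t)) (fun _ => RtoC 1) 0 t0);
    auto using is_path_deriv_RtoC_scal, axis_in, axis_to_id, or_introl.
  intros t Ht; rewrite Re_Cmul_RtoC, Rmult_1_r, Rmult_1_l; unfold t0 in Ht.
  apply Re_rateL_RtoC_nonpos; auto; [lra|rewrite Rabs_pos_eq; lra].
Qed.

Lemma adjprod_axis_21 s : 0 < s < t0 -> m21 (adjprod X Y (RtoC (-1 * s))) = C0.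
Proof.
  apply (adjprod_21_eq0 om mu l (SectorConj al be) X Y
    (fun t => RtoC (-1 * t)) (fun _ => RtoC (-1)) 0 t0);
    auto using is_path_deriv_RtoC_scal, axis_in, axis_to_id, or_intror.
  intros t Ht; rewrite Re_Cmul_RtoC.
  enough (Re (rateL mu l (RtoC (-1 * t))) <= 0) by lra.
  unfold t0 in Ht; apply Re_rateL_RtoC_nonpos; auto; [lra|].
  rewrite Rabs_mult, Rabs_left, Rabs_pos_eq; lra.
Qed.
End Axis.

Section Arcs.
Variable r : R.
Hypothesis r_pos_lt1 : 0 < r < 1.

Lemma adjprod_arc_12 :
  m12 (adjprod X Y (RtoC r)) = C0 -> m12 (adjprod X Y (RtoC (- r))) = C0.
Proof.
  pose proof PI_RGT_0.
  set (g := fun t => Cconj (Cpolar r t)).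
  replace (RtoC r) with (g 0) by (unfold g; now rewrite Cpolar_0, Cconj_RtoC).
  replace (RtoC (- r)) with (g PI) by (unfold g; now rewrite Cpolar_PI, Cconj_RtoC).
  apply (adjprod_12_transport om mu l (SectorConj al be) X Y g
    (fun t => Copp (Cmul Ci (g t))) al be); auto; try lra.
  - intros; apply SectorConj_conj_Cpolar; lra.
  - intros t _; eapply is_path_deriv_eq; [|apply is_path_deriv_conj, is_path_deriv_Cpolar].
    unfold g; destruct (Cpolar r t); unfold Cconj, Cmul, Copp, Ci; simpl; f_equal; ring.
  - intros t Ht.
    replace (Cmul (rateL mu l (g t)) (Copp (Cmul Ci (g t))))
      with (Copp (Cmul (rateL mu l (g t)) (Cmul Ci (g t)))) by ring.
    rewrite Re_Copp; enough (0 <= Re (Cmul (rateL mu l (g t)) (Cmul Ci (g t)))) by lra.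
    apply Re_rateL_mul_Ci_nonneg; auto.
    + unfold g, Im, Cconj, Cpolar; simpl; pose proof (sin_ge_0 t ltac:(lra) ltac:(lra)); nra.
    + unfold g; rewrite Cnorm2_conj, Cnorm2_Cpolar; nra.
Qed.

Lemma adjprod_arc_21 :
  m21 (adjprod X Y (RtoC (- r))) = C0 -> m21 (adjprod X Y (RtoC r)) = C0.
Proof.
  pose proof PI_RGT_0.
  set (g := fun t => Copp (Cpolar r t)).
  replace (RtoC (- r)) with (g 0)
    by (unfold g; rewrite Cpolar_0; unfold RtoC, Copp; simpl; f_equal; ring).
  replace (RtoC r) with (g PI)
    by (unfold g; rewrite Cpolar_PI; unfold RtoC, Copp; simpl; f_equal; ring).
  apply (adjprod_21_transport om mu l (SectorConj al be) X Y g
    (fun t => Cmul Ci (g t)) (PI - be) (PI - al)); auto; try lra.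
  - intros t Ht; exists r, (PI - t); repeat split; try lra.
    unfold g, Cconj, Copp, Cpolar; simpl; rewrite Rtrigo_facts.cos_pi_minus, sin_PI_x;
      f_equal; ring.
  - intros t _; eapply is_path_deriv_eq; [|apply is_path_deriv_opp, is_path_deriv_Cpolar].
    unfold g; ring.
  - intros t Ht; apply Re_rateL_mul_Ci_nonneg; auto.
    + unfold g, Im, Copp, Cpolar; simpl; pose proof (sin_ge_0 t ltac:(lra) ltac:(lra)); nra.
    + unfold g; rewrite Cnorm2_opp, Cnorm2_Cpolar; nra.
Qed.
End Arcs.

Lemma adjprod_axis_eq_id r :
  tends_to_id (ClSectorConj al be) X -> tends_to_id (ClSectorConj al be) Y ->
  0 < r < mu / (Rabs (IZR l) + 1) -> r < 1 ->
  adjprod X Y (RtoC r) = Mid /\ adjprod X Y (RtoC (- r)) = Mid.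
Proof.
  intros X_id Y_id Hr Hr1.
  pose proof (adjprod_axis_diag X_id Y_id 1 r (or_introl eq_refl) Hr) as [P11 P22].
  pose proof (adjprod_axis_diag X_id Y_id (-1) r (or_intror eq_refl) Hr) as [N11 N22].
  pose proof (adjprod_axis_12 X_id Y_id r Hr) as P12.
  pose proof (adjprod_axis_21 X_id Y_id r Hr) as N21.
  rewrite Rmult_1_l in *; replace (-1 * r) with (- r) in * by ring.
  split; apply M2_eq_Mid; auto.
  - apply adjprod_arc_21; auto; lra.
  - apply adjprod_arc_12; auto; lra.
Qed.
End NearTheRealAxis.

(** * Reality of the Stokes multipliers *)

Lemma Mmul_assoc A B C : Mmul A (Mmul B C) = Mmul (Mmul A B) C.
Proof. destruct A, B, C; unfold Mmul; simpl; f_equal; ring. Qed.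

Lemma Madj_mul_eq_id A B : Mmul (Madj A) B = Mid -> Mdet A = C1 -> B = A.
Proof.
  intros HZ Hdet.
  assert (Hright : Mmul A (Madj A) = Mid).
  { transitivity (Mscale (Mdet A) Mid).
    - destruct A; unfold Mmul, Madj, Mdet, Mscale, Mid; simpl; f_equal; ring.
    - rewrite Hdet; unfold Mscale, Mid; simpl; f_equal; ring. }
  transitivity (Mmul (Mmul A (Madj A)) B).
  - rewrite Hright; destruct B; unfold Mmul, Mid; simpl; f_equal; ring.
  - rewrite <- Mmul_assoc, HZ; destruct A; unfold Mmul, Mid; simpl; f_equal; ring.
Qed.

Lemma m11_adjprod_self X z : m11 (adjprod X X z) = Mdet (X z).
Proof. unfold adjprod, Mmul, Madj, Mdet; simpl; ring. Qed.

Lemma normalizing_agree_on_axis om mu l al be X Y r :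
  0 < mu -> al < 0 -> PI < be ->
  (forall z, SectorConj al be z ->
     is_deriv_within (SectorConj al be) X z (normalizing_rhs om mu l X z)) ->
  (forall z, SectorConj al be z ->
     is_deriv_within (SectorConj al be) Y z (normalizing_rhs om mu l Y z)) ->
  tends_to_id (ClSectorConj al be) X -> tends_to_id (ClSectorConj al be) Y ->
  0 < r < mu / (Rabs (IZR l) + 1) -> r < 1 ->
  Y (RtoC r) = X (RtoC r) /\ Y (RtoC (- r)) = X (RtoC (- r)).
Proof.
  intros Hmu Hal Hbe X_sol Y_sol X_id Y_id Hr Hr1.
  destruct (adjprod_axis_eq_id om mu l al be X Y Hmu Hal Hbe X_sol Y_sol r X_id Y_id Hr Hr1)
    as [Zpos Zneg].
  destruct (adjprod_axis_diag om mu l al be X X Hal Hbe X_sol X_sol X_id X_id 1 r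
    (or_introl eq_refl) Hr) as [Dpos _].
  destruct (adjprod_axis_diag om mu l al be X X Hal Hbe X_sol X_sol X_id X_id (-1) r
    (or_intror eq_refl) Hr) as [Dneg _].
  rewrite Rmult_1_l, m11_adjprod_self in Dpos.
  replace (-1 * r) with (- r) in Dneg by ring; rewrite m11_adjprod_self in Dneg.
  split; apply Madj_mul_eq_id; auto.
Qed.

Lemma RtoC_sub x y : Csub (RtoC x) (RtoC y) = RtoC (x - y).
Proof. unfold Csub, Cadd, Copp, RtoC; simpl; f_equal; ring. Qed.

Lemma Cexp_RtoC x : Cexp (RtoC x) = RtoC (exp x).
Proof. unfold Cexp, RtoC; simpl; rewrite cos_0, sin_0; f_equal; ring. Qed.

Lemma Cpowz_RtoC x k : Cpowz (RtoC x) k = RtoC (powerRZ x k).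
Proof.
  assert (Hpow : forall n, Cpow (RtoC x) n = RtoC (x ^ n)).
  { induction n as [|n IH]; [reflexivity|]; simpl; now rewrite IH, RtoC_mul. }
  destruct k; simpl; rewrite ?Hpow, ?Cinv_RtoC; reflexivity.
Qed.

Lemma F_L_RtoC mu l x :
  F_L mu l (RtoC x) = mkM2 (RtoC (powerRZ x (- l) * exp (mu * (/ x - x)))) C0 C0 C1.
Proof.
  unfold F_L; f_equal.
  now rewrite Cpowz_RtoC, Cinv_RtoC, RtoC_sub, RtoC_mul, Cexp_RtoC, RtoC_mul.
Qed.

Lemma Stokes0_real P f c : f <> 0 -> m11 P <> C0 ->
  Mmul (Mreflect P) (mkM2 (RtoC f) C0 C0 C1) =
  Mmul (Mmul P (mkM2 (RtoC f) C0 C0 C1)) (StokesC0 c) -> Im c = 0.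
Proof.
  destruct P as [[a b] [x y] p21 p22], c as [u v]; simpl; intros Hf Hp E.
  pose proof (f_equal m11 E) as E11; pose proof (f_equal m12 E) as E12.
  unfold Mreflect, Mmul, StokesC0, Cmul, Cadd, Copp, Cconj, RtoC, C0, C1 in E11, E12;
    simpl in E11, E12.
  injection E11; intros F1 _; injection E12; intros G1 _.
  assert (Hb : b = 0) by (apply (Rmult_eq_reg_r f); [nra|auto]).
  subst b; assert (Ha : a <> 0) by (intros ->; apply Hp; reflexivity).
  assert (a * f * v = 0) by nra.
  unfold Im; simpl; apply Rmult_integral in H; destruct H as [H|H]; auto.
  apply Rmult_integral in H; lra.
Qed.

Lemma Stokes1_real P f c : m22 P <> C0 ->
  Mmul P (mkM2 (RtoC f) C0 C0 C1) =
  Mmul (Mmul (Mreflect P) (mkM2 (RtoC f) C0 C0 C1)) (StokesC1 c) -> Im c = 0.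
Proof.
  destruct P as [p11 p12 [x y] [a b]], c as [u v]; simpl; intros Hp E.
  pose proof (f_equal m21 E) as E21; pose proof (f_equal m22 E) as E22.
  unfold Mreflect, Mmul, StokesC1, Cmul, Cadd, Copp, Cconj, RtoC, C0, C1 in E21, E22;
    simpl in E21, E22.
  injection E21; intros F1 _; injection E22; intros G1 _.
  assert (Hb : b = 0) by lra.
  subst b; assert (Ha : a <> 0) by (intros ->; apply Hp; reflexivity).
  assert (a * v = 0) by nra.
  unfold Im; simpl; apply Rmult_integral in H; lra.
Qed.

Lemma F_L_RtoC_entry_neq0 mu l x : x <> 0 -> powerRZ x (- l) * exp (mu * (/ x - x)) <> 0.
Proof.
  intro Hx; apply Rmult_integral_contrapositive_currified;
    [now apply powerRZ_NOR|apply Rgt_not_eq, exp_pos].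
Qed.

Lemma Stokes_multiplier0_real mu l Hp Hm c x : x <> 0 ->
  m11 (Hp (RtoC x)) <> C0 -> Mreflect (Hp (RtoC x)) = Hm (RtoC x) ->
  W_L mu l Hm (RtoC x) = Mmul (W_L mu l Hp (RtoC x)) (StokesC0 c) -> Im c = 0.
Proof.
  intros Hx Hp11 Hrefl; unfold W_L; rewrite F_L_RtoC, <- Hrefl.
  apply Stokes0_real; auto using F_L_RtoC_entry_neq0.
Qed.

Lemma Stokes_multiplier1_real mu l Hp Hm c x :
  m22 (Hp (RtoC x)) <> C0 -> Mreflect (Hp (RtoC x)) = Hm (RtoC x) ->
  W_L mu l Hp (RtoC x) = Mmul (W_L mu l Hm (RtoC x)) (StokesC1 c) -> Im c = 0.
Proof.
  intros Hp22 Hrefl; unfold W_L; rewrite F_L_RtoC, <- Hrefl.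
  now apply Stokes1_real.
Qed.

Lemma diag_neq0_of_near_id M : Mnorm (Msub M Mid) < 1 -> m11 M <> C0 /\ m22 M <> C0.
Proof.
  intro Hnear; destruct (Cnorm_entries_le_Mnorm_sub_id M) as [H11 [_ [_ H22]]].
  assert (Hone : Cnorm (Csub C0 C1) = 1).
  { replace (Csub C0 C1) with (RtoC (-1)) by (unfold Csub, Cadd, Copp, RtoC, C0, C1; simpl;
      f_equal; ring).
    rewrite Cnorm_RtoC, Rabs_left; lra. }
  split; intro E; [rewrite E in H11|rewrite E in H22]; lra.
Qed.

Lemma exists_pos_below a b c : 0 < a -> 0 < b -> 0 < c ->
  exists r, 0 < r < a /\ r < b /\ r < c.
Proof.
  intros; exists (Rmin (Rmin a b) c / 2).
  pose proof (Rmin_l (Rmin a b) c); pose proof (Rmin_r (Rmin a b) c).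
  pose proof (Rmin_l a b); pose proof (Rmin_r a b).
  assert (0 < Rmin (Rmin a b) c) by (repeat apply Rmin_glb_lt; auto).
  repeat split; lra.
Qed.

Theorem mainTheorem3 :
  forall (om mu B : R) (l : Z) (al be : R),
    0 < om -> 0 < mu -> IZR l = B / om ->
    - (PI / 2) < al < 0 -> PI < be < 3 * PI / 2 ->
    forall Hp Hm : Cx -> M2,
      normalizing om mu l (Sector al be) (ClSector al be) Hp ->
      normalizing om mu l (SectorConj al be) (ClSectorConj al be) Hm ->
      forall c0 c1 : Cx,
        (forall z, Sigma0 al be z ->
           W_L mu l Hm z = Mmul (W_L mu l Hp z) (StokesC0 c0)) ->
        (forall z, Sigma1 al be z ->
           W_L mu l Hp z = Mmul (W_L mu l Hm z) (StokesC1 c1)) ->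
        Im c0 = 0 /\ Im c1 = 0.
Proof.
  intros om mu B l al be _ Hmu _ [_ Hal] [Hbe _] Hp Hm NP NM c0 c1 Hstokes0 Hstokes1.
  destruct (normalizing_solves_tends_to_id _ _ _ _ _ _ NP ltac:(now left)) as [Hp_sol Hp_id].
  destruct (normalizing_solves_tends_to_id _ _ _ _ _ _ NM) as [Hm_sol Hm_id].
  { left; unfold Cconj, C0; simpl; f_equal; ring. }
  destruct (Hp_id 1 Rlt_0_1) as [d [Hd Hp_near]].
  assert (Ht0 : 0 < mu / (Rabs (IZR l) + 1))
    by (apply Rdiv_lt_0_compat; [|pose proof (Rabs_pos (IZR l))]; lra).
  destruct (exists_pos_below _ _ _ Ht0 Rlt_0_1 Hd) as [r [Hr [Hr1 Hrd]]].
  destruct (normalizing_agree_on_axis om mu l al be Hm (reflected Hp) r Hmu Hal Hbe Hm_sol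
    (reflected_solves _ _ _ _ _ Hp_sol) Hm_id (tends_to_id_reflected _ _ Hp_id) Hr Hr1)
    as [Epos Eneg].
  unfold reflected in Epos, Eneg; rewrite Cconj_RtoC in Epos, Eneg.
  assert (Hp_diag : forall x, x <> 0 -> Rabs x < d ->
            m11 (Hp (RtoC x)) <> C0 /\ m22 (Hp (RtoC x)) <> C0).
  { intros x Hx Hxd; apply diag_neq0_of_near_id, Hp_near; [|now rewrite Cnorm_RtoC].
    apply Sector_ClSector, Sector_RtoC; auto; lra. }
  split.
  - apply (Stokes_multiplier0_real mu l Hp Hm c0 (- r)); auto; [lra| |].
    + apply Hp_diag; [lra|rewrite Rabs_Ropp, Rabs_pos_eq; lra].
    + apply Hstokes0, Sigma0_RtoC; auto; lra.
  - apply (Stokes_multiplier1_real mu l Hp Hm c1 r); auto.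
    + apply Hp_diag; [lra|rewrite Rabs_pos_eq; lra].
    + apply Hstokes1, Sigma1_RtoC; auto; lra.
Qed.
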